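(* Let $X$ be a finite set, $b\in\mathbb{N}$, $(\varphi_i)_{i\in[1,b]}$ an individual bin evaluation, and $(X_1,\dots,X_\tau)$ a type partition of $X$. Let $X'\subseteq X$ and let $\vec p,\vec q\in\mathbb{N}_0^\tau$ be such that $|X_j\cap X'|\ge p_j$ and $|X_j\cap(X\setminus X')|\ge q_j$ for all $j\in[1,\tau]$. Then for every $i\in[1,b]$ there exist sets $X_{\vec p}\subseteq X'$ containing exactly $p_j$ elements of $X_j\cap X'$ for every $j$ and $X_{\vec q}\subseteq X\setminus X'$ containing exactly $q_j$ elements of $X_j\cap(X\setminus X')$ for every $j$, and the value $\varphi_i((X'\setminus X_{\vec p})\cup X_{\vec q})$ is the same for every such choice of $X_{\vec p}$ and $X_{\vec q}$ (so the type vector operation $\varphi_i((X'\setminus\vec p)\cup\vec q):=\varphi_i((X'\setminus X_{\vec p})\cup X_{\vec q})$ is well-defined).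
   Context: For integers $a\le b$, $[a,b]=\{i\in\mathbb{N}: a\le i\le b\}$. Fix $\mathrm{inf}\in\{\infty,-\infty\}$. An individual bin evaluation is a $b$-tuple $(\varphi_i)_{i\in[1,b]}$ of functions $\varphi_i:2^X\to\mathbb{Z}\cup\{\mathrm{inf}\}$. Two elements $x,y\in X$ are target equivalent if for every $i\in[1,b]$ and every $A\subseteq X$ with $\{x,y\}\cap A=\{x\}$ we have $\varphi_i((A\setminus\{x\})\cup\{y\})=\varphi_i(A)$. A type partition of $X$ is a tuple $(X_1,\dots,X_\tau)$ of pairwise disjoint sets with union $X$ such that the elements of each $X_j$ are pairwise target equivalent. *)

From mathcomp Require Import all_boot all_order all_algebra.
Set Implicit Arguments. Unset Strict Implicit. Unset Printing Implicit Defensive.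

(* Values in Z ∪ {inf}: [Some z] is the integer z, [None] is the fixed
   infinite value inf (either +oo or -oo; which one is irrelevant here). *)
Definition zinf := option int.

(* An individual bin evaluation on the finite ground set X = T, with b bins;
   bins are indexed 0..b-1 (instead of 1..b). *)
Definition bin_eval (T : finType) (b : nat) := 'I_b -> {set T} -> zinf.

Definition target_equiv (T : finType) (b : nat) (phi : bin_eval T b) (x y : T) : Prop :=
  forall (i : 'I_b) (A : {set T}), [set x; y] :&: A = [set x] ->
    phi i ((A :\ x) :|: [set y]) = phi i A.

Definition type_partition (T : finType) (b : nat) (phi : bin_eval T b)
    (tau : nat) (Xs : 'I_tau -> {set T}) : Prop :=
  [/\ forall j k : 'I_tau, j != k -> [disjoint Xs j & Xs k],
      \bigcup_(j < tau) Xs j = [set: T]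
    & forall (j : 'I_tau) (x y : T), x \in Xs j -> y \in Xs j -> target_equiv phi x y].

Definition selects (T : finType) (tau : nat) (Xs : 'I_tau -> {set T})
    (Y : {set T}) (p : 'I_tau -> nat) (S : {set T}) : Prop :=
  S \subset Y /\ forall j : 'I_tau, #|S :&: (Xs j :&: Y)| = p j.

From mathcomp Require Import all_boot all_order all_algebra.

Set Implicit Arguments.
Unset Strict Implicit.
Unset Printing Implicit Defensive.

(* Two sets meeting every block X_j in equally many elements can be turned into
   each other by swapping, one at a time, an element of the first set for an
   element of the second set lying in the same block.  Elements of a block are
   target equivalent, so no swap changes phi_i.  The sets (X' \ X_p) u X_q all
   meet X_j in |X_j n X'| - p_j + q_j elements, hence phi_i takes one value on
   them; selections exist because each block is large enough. *)

Lemma exists_subset_card (T : finType) (A : {set T}) n :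
  n <= #|A| -> exists2 B : {set T}, B \subset A & #|B| = n.
Proof.
move=> le_n_A; exists [set x in take n (enum A)].
  by apply/subsetP => x; rewrite inE => /mem_take; rewrite mem_enum.
by rewrite cardsE (card_uniqP _) ?take_uniq ?enum_uniq // size_takel // -cardE.
Qed.

Lemma exchange_cardsI (T : finType) (A B K : {set T}) x :
  #|A :&: K| = #|B :&: K| -> x \in K -> x \in A :\: B ->
  exists2 y, y \in K & y \in B :\: A.
Proof.
move=> eqAB xK /setDP[xA xNB].
have : ~~ (B :&: K \subset A :&: K).
  apply: contra xNB => /(subset_cardP (esym eqAB)) eqBA.
  by have /setIP[] : x \in B :&: K by rewrite eqBA inE xA xK.
case/subsetPn => y /setIP[yB yK]; rewrite inE yK andbT => yNA.
by exists y; rewrite // inE yNA.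
Qed.

Lemma card_swapI (T : finType) (A K : {set T}) x y :
  x \in A -> y \notin A -> (x \in K) = (y \in K) ->
  #|(y |: A :\ x) :&: K| = #|A :&: K|.
Proof.
move=> xA yNA xKy; case xK: (x \in K).
  have yK : y \in K by rewrite -xKy.
  rewrite setIUl (setIidPl _) ?sub1set // setIDAC cardsU1 !inE (negbTE yNA).
  by rewrite andbF (cardsD1 x (A :&: K)) inE xA xK.
suff -> : (y |: A :\ x) :&: K = A :&: K by [].
apply/setP => z; rewrite !inE.
case: (eqVneq z y) => [->|_]; first by rewrite -xKy xK !andbF.
by case: (eqVneq z x) => [->|]; rewrite ?xK ?andbF.
Qed.

Lemma target_equiv_swap (T : finType) (b : nat) (phi : bin_eval T b) x y i
    (A : {set T}) :
  target_equiv phi x y -> x \in A -> y \notin A -> phi i (y |: A :\ x) = phi i A.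
Proof.
move=> equiv_xy xA yNA; rewrite setUC; apply: equiv_xy.
apply/setP => z; rewrite !inE; case: (eqVneq z x) => [->|_]; first by rewrite xA.
by case: (eqVneq z y) => [->|]; rewrite ?(negbTE yNA).
Qed.

Lemma card_swap_selectionsI (T : finType) (tau : nat) (Xs : 'I_tau -> {set T})
    (X' : {set T}) (p q : 'I_tau -> nat) (Xp Xq : {set T}) j :
  selects Xs X' p Xp -> selects Xs (~: X') q Xq ->
  #|((X' :\: Xp) :|: Xq) :&: Xs j| = #|Xs j :&: X'| - p j + q j.
Proof.
move=> [_ card_p] [sub_q card_q].
have disj : (X' :\: Xp) :&: Xs j :&: (Xq :&: Xs j) = set0.
  apply/setP => z; rewrite !inE; case zq: (z \in Xq); rewrite /= ?andbF //.
  by have := subsetP sub_q z zq; rewrite inE => /negbTE ->; rewrite !andbF.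
rewrite setIUl cardsU disj cards0 subn0 setIDAC cardsD.
rewrite (setIC X') [_ :&: Xp]setIC.
have -> : Xq :&: Xs j = Xq :&: (Xs j :&: ~: X').
  by rewrite [Xs j :&: _]setIC setIA (setIidPl sub_q).
by rewrite card_p card_q.
Qed.

Section BlockPartition.

Variables (T : finType) (tau : nat) (Xs : 'I_tau -> {set T}).
Hypothesis Xs_disjoint : forall j k : 'I_tau, j != k -> [disjoint Xs j & Xs k].

Lemma eq_block j k x : x \in Xs j -> x \in Xs k -> j = k.
Proof.
move=> xj xk; apply/eqP; apply: contraT => /Xs_disjoint/disjointFr/(_ xj).
by rewrite xk.
Qed.

Lemma same_block_mem j x y :
  x \in Xs j -> y \in Xs j -> forall k, (x \in Xs k) = (y \in Xs k).
Proof.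
by move=> xj yj k; apply/idP/idP => [/(eq_block xj) <- | /(eq_block yj) <-].
Qed.

Lemma exists_selects (Y : {set T}) (r : 'I_tau -> nat) :
  (forall j, r j <= #|Xs j :&: Y|) -> exists S, selects Xs Y r S.
Proof.
move=> le_r.
have [B sub_B card_B] := fin_all_exists2 (fun j => exists_subset_card (le_r j)).
exists (\bigcup_j B j); split.
  by apply/bigcupsP => j _; apply: subset_trans (sub_B j) (subsetIr _ _).
move=> j; rewrite -card_B; congr #|pred_of_set _|; apply/setP => z; rewrite inE.
apply/andP/idP => [[/bigcupP[k _ zk] /setIP[zj _]] | zj].
  by have /setIP[zk' _] := subsetP (sub_B k) z zk; rewrite -(eq_block zk' zj).
by split; [apply/bigcupP; exists j | exact: subsetP (sub_B j) z zj].
Qed.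

Hypothesis Xs_cover : \bigcup_(j < tau) Xs j = [set: T].

Lemma mem_block x : exists j, x \in Xs j.
Proof.
have /bigcupP[j _ xj] : x \in \bigcup_(j < tau) Xs j by rewrite Xs_cover inE.
by exists j.
Qed.

Definition block_swap_invariant (R : Type) (f : {set T} -> R) :=
  forall j x y (A : {set T}),
    x \in Xs j -> y \in Xs j -> x \in A -> y \notin A -> f (y |: A :\ x) = f A.

Lemma block_swap_invariant_eq (R : Type) (f : {set T} -> R) :
  block_swap_invariant f ->
  forall A B, (forall j, #|A :&: Xs j| = #|B :&: Xs j|) -> f A = f B.
Proof.
move=> f_swap A B; have [n] := ubnP #|A :\: B|.
elim: n A => // n IHn A ltAB eqAB.
case: (set_0Vmem (A :\: B)) => [AB0 | [x xAB]].
  congr f; apply/eqP; rewrite eqEsubset -setD_eq0 AB0 eqxx /=.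
  apply/subsetP => y yB; apply: contraT => yNA; have [j yj] := mem_block y.
  have yBA : y \in B :\: A by apply/setDP.
  have [x _] := exchange_cardsI (esym (eqAB j)) yj yBA.
  by rewrite AB0 inE.
have [j xj] := mem_block x.
have [y yj /setDP[yB yNA]] := exchange_cardsI (eqAB j) xj xAB.
have /setDP[xA _] := xAB.
rewrite -(f_swap j x y A) //; apply: IHn => [|k]; last first.
  by rewrite card_swapI // (same_block_mem xj yj).
have -> : (y |: A :\ x) :\: B = (A :\: B) :\ x.
  apply/setP => z; rewrite !inE.
  case: (eqVneq z y) => [->|_]; first by rewrite yB !andbF.
  by case: (z \in A); case: (z \in B); rewrite ?andbF.
by move: ltAB; rewrite (cardsD1 x (A :\: B)) xAB add1n ltnS.
Qed.

End BlockPartition.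

Theorem proposition8 (T : finType) (b : nat) (phi : bin_eval T b)
    (tau : nat) (Xs : 'I_tau -> {set T})
    (Htp : type_partition phi Xs)
    (X' : {set T}) (p q : 'I_tau -> nat)
    (Hp : forall j : 'I_tau, p j <= #|Xs j :&: X'|)
    (Hq : forall j : 'I_tau, q j <= #|Xs j :&: ~: X'|) :
  forall i : 'I_b,
    (exists Xp Xq : {set T}, selects Xs X' p Xp /\ selects Xs (~: X') q Xq) /\
    (forall Xp Xq Xp' Xq' : {set T},
        selects Xs X' p Xp -> selects Xs (~: X') q Xq ->
        selects Xs X' p Xp' -> selects Xs (~: X') q Xq' ->
        phi i ((X' :\: Xp) :|: Xq) = phi i ((X' :\: Xp') :|: Xq')).
Proof.
have [Xs_disjoint Xs_cover Xs_equiv] := Htp.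
move=> i; split.
  have [Xp sel_p] := exists_selects Xs_disjoint Hp.
  have [Xq sel_q] := exists_selects Xs_disjoint Hq.
  by exists Xp, Xq.
move=> Xp Xq Xp' Xq' sel_p sel_q sel_p' sel_q'.
have phi_swap : block_swap_invariant Xs (phi i).
  by move=> j x y A xj yj; apply/target_equiv_swap/(Xs_equiv j).
apply: (block_swap_invariant_eq Xs_disjoint Xs_cover phi_swap) => j.
by rewrite (card_swap_selectionsI j sel_p sel_q)
   (card_swap_selectionsI j sel_p' sel_q').
Qed.
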